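(* Consider the following model. A principal P and an agent A interact over two periods $t\in\{1,2\}$. States $\omega_t\in\{0,1\}$ satisfy $\Pr[\omega_1=1]=\mu_0\in(0,1)$ and $\Pr[\omega_2=\omega\mid\omega_1=\omega]=\rho\in(1/2,1)$; neither player observes states directly. In each period A chooses $e_t\in\{0,1\}$; if $e_t=1$ he observes $\omega_t$, if $e_t=0$ he observes $\omega_t$ with probability $\pi\in(0,1)$ and nothing otherwise. A then reports $r_t\in\{\varnothing,\omega_t\}$ if he observed $\omega_t$ and $r_t=\varnothing$ otherwise. At the end of period 2, P chooses $x$. Payoffs: P gets $\mathbb{1}[x=\omega_2]-k(e_1+e_2)$, A gets $x-c(e_1+e_2)$, $c,k>0$. Let $\kappa=k/(1-\pi)$, $\gamma=c/(1-\pi)$, $\mu_2(\varnothing)=\rho\mu_0+(1-\rho)(1-\mu_0)$, and assume $$\kappa\in(1-\rho,\min\{\mu_2(\varnothing),1-\mu_2(\varnothing)\}],\qquad \gamma\in(1-\rho,\mu_2(\varnothing)].$$ Consider the mechanism $m^*$ with $\sigma_1=0$, $\sigma_2(r_1)=\mathbb{1}[r_1=\varnothing]$, and $\hat x(r_1,1)=1$, $\hat x(r_1,0)=0$ for all $r_1$, $\hat x(1,\varnothing)=1$, $\hat x(0,\varnothing)=0$, $\hat x(\varnothing,\varnothing)=0$. Consider A's deviation strategy: test in period 1; report $r_1=1$ if $\omega_1=1$ and $r_1=\varnothing$ otherwise; never test in period 2; in period 2 report $r_2=1$ if $\omega_2=1$ is observed and $r_2=\varnothing$ otherwise. Then this deviation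 gives A a strictly higher expected payoff than his best strategy among those that do not test in period 1 if and only if $$\gamma<\bar\gamma:=\frac{(1-\rho)[\mu_0-(1-\mu_0)(1-\pi)]}{\pi}.$$
   Context: The mechanism $m^*$ is the baseline (first-best, efficient-assignment) mechanism for this range of $\kappa$, modified so that no report after a requested test yields assignment $0$. The principal commits to the mechanism; A best-responds to it. *)

From mathcomp Require Import all_boot all_order all_algebra.
Set Implicit Arguments. Unset Strict Implicit. Unset Printing Implicit Defensive.
Import Order.TTheory GRing.Theory Num.Theory.
Local Open Scope ring_scope.

(* States, efforts: bool (true = 1).  Observations / reports: option bool,
   None = "nothing observed" / the empty report (varnothing). *)

Definition mstar_sigma1 : bool := false.
Definition mstar_sigma2 (r1 : option bool) : bool := r1 == None.
Definition mstar_xhat (r1 r2 : option bool) : bool :=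
  match r2 with
  | Some true => true
  | Some false => false
  | None => match r1 with
            | Some true => true
            | _ => false
            end
  end.

(* Period-2 behaviour may depend on everything
   A knows: his period-1 observation o1 (his report r1 and P's recommendation
   sigma2(r1) are functions of o1 under the strategy). *)
Record strategy := Strategy {
  eff1 : bool;
  rep1 : option bool -> option bool;
  eff2 : option bool -> bool;
  rep2 : option bool -> option bool -> option bool
}.

Definition feasible (s : strategy) : Prop :=
  (forall o, rep1 s o = None \/ rep1 s o = o) /\
  (forall o1 o2, rep2 s o1 o2 = None \/ rep2 s o1 o2 = o2).

Section Model.
Variables (R : realFieldType) (mu0 rho pi c : R).

Definition prior (w : bool) : R := if w then mu0 else 1 - mu0.
Definition trans (w w' : bool) : R := if w' == w then rho else 1 - rho.
Definition obsP (e w : bool) (o : option bool) : R :=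
  match o with
  | Some v => if v == w then (if e then 1 else pi) else 0
  | None => if e then 0 else 1 - pi
  end.

Definition payoffA (s : strategy) : R :=
  \sum_(w1 : bool) \sum_(w2 : bool) \sum_(o1 : option bool) \sum_(o2 : option bool)
    prior w1 * trans w1 w2 * obsP (eff1 s) w1 o1 * obsP (eff2 s o1) w2 o2 *
    ((nat_of_bool (mstar_xhat (rep1 s o1) (rep2 s o1 o2)))%:R
      - c * ((nat_of_bool (eff1 s))%:R + (nat_of_bool (eff2 s o1))%:R)).

Definition bestNoTest (s : strategy) : Prop :=
  feasible s /\ eff1 s = false /\
  forall s', feasible s' -> eff1 s' = false -> payoffA s' <= payoffA s.

Definition mu2empty : R := rho * mu0 + (1 - rho) * (1 - mu0).
Definition gammabar : R := (1 - rho) * (mu0 - (1 - mu0) * (1 - pi)) / pi.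

End Model.

Definition deviation : strategy :=
  Strategy true
    (fun o => if o is Some true then Some true else None)
    (fun _ => false)
    (fun _ o2 => if o2 is Some true then Some true else None).

From mathcomp Require Import all_boot all_order all_algebra.
From mathcomp Require Import ring lra.
Set Implicit Arguments. Unset Strict Implicit. Unset Printing Implicit Defensive.
Import Order.TTheory GRing.Theory Num.Theory.
Local Open Scope ring_scope.

(* With no test in period 1, A's payoff splits along his period-1 observation
   o1 into the values of a one-period problem in which he believes omega2 = 1
   with probability posterior o1.  Under m^* a report r1 = 1 already secures
   x = 1, so after seeing omega1 = 1 he gets 1; after any other report x = 1
   requires r2 = 1, and he either skips the test (value pi q) or takes it
   (value q - c).  The bounds on gamma make him skip it after omega1 = 0 and
   take it after seeing nothing, so every best no-test strategy earns
   value_no_test.  The deviation earns mu0 + (1 - mu0) pi (1 - rho) - c, and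
   the difference is (1 - pi) pi (gammabar - gamma). *)

Lemma big_option_bool (V : nmodType) (F : option bool -> V) :
  \sum_(o : option bool) F o = F None + F (Some true) + F (Some false).
Proof.
rewrite (perm_big [:: None; Some true; Some false]) /=.
  by rewrite !big_cons big_nil addr0 addrA.
apply: uniq_perm; first exact: index_enum_uniq.
  by [].
by move=> x; rewrite mem_index_enum; case: x => [[]|].
Qed.

Section PeriodTwo.
Variables (R : realFieldType) (pi c : R).

Definition bern (q : R) (w : bool) : R := if w then q else 1 - q.

Definition period2_value (q : R) (e : bool) (r1 : option bool)
    (r2 : option bool -> option bool) : R :=
  \sum_(w2 : bool) \sum_(o2 : option bool)
    bern q w2 * obsP pi e w2 o2 *
    ((nat_of_bool (mstar_xhat r1 (r2 o2)))%:R - c * (nat_of_bool e)%:R).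

Definition feasible_report (r : option bool -> option bool) : Prop :=
  forall o, r o = None \/ r o = o.

Lemma sum_bern_obsP (q : R) e :
  \sum_(w2 : bool) \sum_(o2 : option bool) bern q w2 * obsP pi e w2 o2 = 1.
Proof. by rewrite !big_bool !big_option_bool /bern /=; case: e; ring. Qed.

Lemma period2_value_le1 (q : R) e r1 r2 :
  0 <= pi <= 1 -> 0 <= q <= 1 -> 0 <= c -> period2_value q e r1 r2 <= 1.
Proof.
move=> /andP[? ?] /andP[? ?] ?.
rewrite -(sum_bern_obsP q e); apply: ler_sum => w2 _; apply: ler_sum => o2 _.
rewrite -[leRHS]mulr1; apply: ler_wpM2l.
  by apply: mulr_ge0; case: w2; case: e; case: o2 => [[]|] /=; lra.
by case: mstar_xhat; case: e => /=; lra.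
Qed.

Lemma period2_value_le_max (q : R) e r1 r2 :
  0 <= pi <= 1 -> 0 <= q <= 1 -> r1 != Some true -> feasible_report r2 ->
  period2_value q e r1 r2 <= Num.max (pi * q) (q - c).
Proof.
move=> /andP[? ?] /andP[? ?] r1N1 r2F.
rewrite le_max /period2_value !big_bool !big_option_bool /= /bern.
have ->: mstar_xhat r1 = mstar_xhat None by case: r1 r1N1 => [[]|].
case: e; [apply/orP; right | apply/orP; left];
  case: (r2F None) => ->; case: (r2F (Some true)) => ->;
  case: (r2F (Some false)) => -> /=; nra.
Qed.

End PeriodTwo.

Definition best_no_test : strategy :=
  Strategy false
    (fun o => if o is Some true then Some true else None)
    (fun o => o == None)
    (fun _ o2 => if o2 is Some true then Some true else None).

Lemma best_no_test_feasible : feasible best_no_test.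
Proof. by split=> [[[]|]|o1 [[]|]] /=; auto. Qed.

Section NoTest.
Variables (R : realFieldType) (mu0 rho pi c : R).

Definition posterior (o1 : option bool) : R :=
  if o1 is Some w1 then trans rho w1 true else mu2empty mu0 rho.

Definition obs1_marginal (o1 : option bool) : R :=
  if o1 is Some w1 then prior mu0 w1 * pi else 1 - pi.

Lemma joint_obs1_state2 o1 w2 :
  \sum_(w1 : bool) prior mu0 w1 * trans rho w1 w2 * obsP pi false w1 o1 =
  obs1_marginal o1 * bern (posterior o1) w2.
Proof.
by rewrite big_bool; case: o1 => [[]|]; case: w2; rewrite /= /bern /trans /mu2empty /=; ring.
Qed.

Lemma payoffA_no_test s : eff1 s = false ->
  payoffA mu0 rho pi c s =
  \sum_(o1 : option bool)
    obs1_marginal o1 * period2_value pi c (posterior o1) (eff2 s o1) (rep1 s o1) (rep2 s o1).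
Proof.
move=> s_no_test; rewrite /payoffA s_no_test.
under eq_bigr => w1 _ do rewrite exchange_big.
rewrite exchange_big /period2_value; apply: eq_bigr => o1 _.
rewrite exchange_big; under eq_bigr => w2 _ do rewrite exchange_big.
rewrite mulr_sumr; apply: eq_bigr => w2 _; rewrite mulr_sumr; apply: eq_bigr => o2 _.
under eq_bigr do rewrite -mulrA.
by rewrite -mulr_suml joint_obs1_state2 /= add0r !mulrA.
Qed.

Definition value_no_test : R :=
  (1 - pi) * (mu2empty mu0 rho - c) + mu0 * pi + (1 - mu0) * pi * (pi * (1 - rho)).

Lemma payoffA_best_no_test :
  payoffA mu0 rho pi c best_no_test = value_no_test.
Proof.
rewrite payoffA_no_test // big_option_bool /period2_value !big_bool !big_option_bool.
by rewrite /= /bern /trans /value_no_test /=; ring.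
Qed.

Lemma payoffA_deviation :
  payoffA mu0 rho pi c deviation = mu0 + (1 - mu0) * pi * (1 - rho) - c.
Proof.
rewrite /payoffA !big_bool !big_option_bool /=.
by rewrite /trans /prior /obsP /=; ring.
Qed.

Lemma value_no_test_lt_deviation :
  0 < pi < 1 ->
  value_no_test < mu0 + (1 - mu0) * pi * (1 - rho) - c <->
  c / (1 - pi) < gammabar mu0 rho pi.
Proof.
move=> /andP[pi_gt0 pi_lt1].
have gap : mu0 + (1 - mu0) * pi * (1 - rho) - c - value_no_test =
           (1 - pi) * pi * (gammabar mu0 rho pi - c / (1 - pi)).
  rewrite /value_no_test /gammabar /mu2empty; field.
  by apply/andP; split; rewrite ?subr_eq0 gt_eqF.
rewrite -subr_gt0 gap pmulr_rgt0 ?subr_gt0 //.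
by rewrite mulr_gt0 // subr_gt0.
Qed.

Hypotheses (mu0_01 : 0 <= mu0 <= 1) (rho_01 : 0 <= rho <= 1) (pi_01 : 0 <= pi <= 1).
Hypotheses (c_ge : (1 - pi) * (1 - rho) <= c)
           (c_le : c <= (1 - pi) * mu2empty mu0 rho).

Lemma payoffA_no_test_le s :
  feasible s -> eff1 s = false -> payoffA mu0 rho pi c s <= value_no_test.
Proof.
move=> [rep1F rep2F] s_no_test.
have /andP[? ?] := pi_01.
move: mu0_01 rho_01 c_ge c_le => /andP[? ?] /andP[? ?] ? ?.
have mu2_01 : 0 <= mu2empty mu0 rho <= 1 by rewrite /mu2empty; apply/andP; split; nra.
have c_ge0 : 0 <= c by apply: le_trans c_ge; apply: mulr_ge0; lra.
have test_if_uninformed : pi * mu2empty mu0 rho <= mu2empty mu0 rho - c by nra.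
have no_test_if_low : 1 - rho - c <= pi * (1 - rho) by nra.
rewrite payoffA_no_test // big_option_bool /value_no_test.
apply: lerD; first apply: lerD.
- apply: ler_wpM2l; first by rewrite /=; lra.
  rewrite -(max_r test_if_uninformed).
  apply: period2_value_le_max => //.
  by have [->|->] := rep1F None.
- rewrite -[_ * pi]mulr1; apply: ler_wpM2l; first by rewrite /=; nra.
  exact: period2_value_le1.
- apply: ler_wpM2l; first by rewrite /=; nra.
  rewrite -(max_l no_test_if_low).
  apply: period2_value_le_max => //.
    by rewrite /posterior /trans /=; apply/andP; split; lra.
  by have [->|->] := rep1F (Some false).
Qed.

Lemma best_no_test_bestNoTest : bestNoTest mu0 rho pi c best_no_test.
Proof.
split; first exact: best_no_test_feasible.
split=> // s s_feas s_no_test.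
by rewrite payoffA_best_no_test payoffA_no_test_le.
Qed.

Lemma bestNoTest_payoffA s :
  bestNoTest mu0 rho pi c s -> payoffA mu0 rho pi c s = value_no_test.
Proof.
move=> [s_feas [s_no_test s_best]].
apply/eqP; rewrite eq_le payoffA_no_test_le // -payoffA_best_no_test.
by apply: s_best; first exact: best_no_test_feasible.
Qed.

End NoTest.

Theorem proposition2 (R : realFieldType) (mu0 rho pi c k : R) :
  0 < mu0 < 1 -> 2^-1 < rho < 1 -> 0 < pi < 1 -> 0 < c -> 0 < k ->
  1 - rho < k / (1 - pi) ->
  k / (1 - pi) <= Num.min (mu2empty mu0 rho) (1 - mu2empty mu0 rho) ->
  1 - rho < c / (1 - pi) -> c / (1 - pi) <= mu2empty mu0 rho ->
  (exists s, bestNoTest mu0 rho pi c s) /\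
  (forall s, bestNoTest mu0 rho pi c s ->
     (payoffA mu0 rho pi c s < payoffA mu0 rho pi c deviation
        <-> c / (1 - pi) < gammabar mu0 rho pi)).
Proof.
move=> /andP[mu0_gt0 mu0_lt1] /andP[rho_gt_half rho_lt1] pi_01 _ _ _ _ gamma_gt gamma_le.
have [pi_gt0 pi_lt1] := andP pi_01.
have rho_gt0 : 0 < rho by apply: lt_trans rho_gt_half; rewrite invr_gt0.
have mu0_01 : 0 <= mu0 <= 1 by apply/andP; split; lra.
have rho_01 : 0 <= rho <= 1 by apply/andP; split; lra.
have pi_01w : 0 <= pi <= 1 by apply/andP; split; lra.
have c_ge : (1 - pi) * (1 - rho) <= c by rewrite mulrC -ler_pdivlMr ?subr_gt0 // ltW.
have c_le : c <= (1 - pi) * mu2empty mu0 rho by rewrite mulrC -ler_pdivrMr ?subr_gt0.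
split; first by exists best_no_test; apply: best_no_test_bestNoTest.
move=> s /(bestNoTest_payoffA mu0_01 rho_01 pi_01w c_ge c_le) ->.
by rewrite payoffA_deviation; apply: value_no_test_lt_deviation.
Qed.
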